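(* For every even integer $k\geq 2$ there is an undirected graph $G$ with degeneracy at most $k$, $n(G)=\frac{(k+2)k}{2}+1$ and $f(G)=\frac{k^2}{2}$.
   Context: All graphs are finite and simple. $n(G)$ is the number of vertices and $f(G)$ is the minimum size of a feedback vertex set of $G$ (a set $F\subseteq V(G)$ with $G-F$ acyclic). An ordering $\phi$ of $V(G)$ is a $k$-elimination ordering if each vertex has at most $k$ neighbours preceding it in $\phi$; the degeneracy of $G$ is the least $k$ such that $G$ has a $k$-elimination ordering. *)

From mathcomp Require Import all_boot.
Set Implicit Arguments. Unset Strict Implicit. Unset Printing Implicit Defensive.

Definition simple_graph (T : finType) (e : rel T) : Prop :=
  symmetric e /\ irreflexive e.

(* An ordering phi of V(G) is given as a duplicate-free sequence s listing all
   vertices; y precedes x iff index y s < index x s. *)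
Definition elim_ordering (T : finType) (e : rel T) (k : nat) (s : seq T) : Prop :=
  [/\ uniq s, (forall x : T, x \in s) &
      forall x : T, #|[set y | e x y & index y s < index x s]| <= k].

Definition degeneracy_le (T : finType) (e : rel T) (k : nat) : Prop :=
  exists s : seq T, elim_ordering e k s.

Definition is_graph_cycle (T : finType) (e : rel T) (c : seq T) : Prop :=
  [/\ 2 < size c, uniq c & cycle e c].

Definition is_fvs (T : finType) (e : rel T) (F : {set T}) : Prop :=
  forall c : seq T, is_graph_cycle e c -> all (fun v => v \notin F) c -> False.

Definition fvs_number_is (T : finType) (e : rel T) (m : nat) : Prop :=
  (exists F : {set T}, is_fvs e F /\ #|F| = m) /\
  (forall F : {set T}, is_fvs e F -> m <= #|F|).

From mathcomp Require Import all_boot zify.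
Set Implicit Arguments. Unset Strict Implicit. Unset Printing Implicit Defensive.

(* With m = k/2, take m copies of K_(k+2) minus an edge (whose two ends are
   the endpoints of the copy) and an apex; the first endpoint of every copy,
   and the apex, is joined to both endpoints of every earlier copy.  Listing
   the vertices copy by copy and the apex last, every vertex has at most k
   earlier neighbours.  An induced forest meets a copy in at most two vertices
   unless it contains both endpoints and a middle vertex; such a full copy
   closes a 4-cycle with any later first endpoint or the apex in the forest,
   so a forest has at most 2m + 1 vertices, and the apex together with a
   non-endpoint edge of each copy attains this bound. *)

Lemma card_le_of_code (T : finType) (A : {pred T}) (g : T -> nat) (K : nat) :
  {in A &, injective g} -> {in A, forall x, g x < K} -> #|A| <= K.
Proof.
move=> g_inj g_lt; rewrite cardE -(size_map g) -(size_iota 0 K).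
apply: uniq_leq_size => [|_ /mapP[x + ->]].
  by rewrite map_inj_in_uniq ?enum_uniq // => x y; rewrite !mem_enum; apply: g_inj.
by rewrite mem_enum mem_iota => /g_lt.
Qed.

Lemma increasing_graph_cycle n (e : rel 'I_n) (c : seq 'I_n) :
  2 < size c -> sorted (fun x y : 'I_n => x < y) c -> cycle e c -> is_graph_cycle e c.
Proof.
move=> c_gt2 c_sorted c_cycle; split=> //.
by apply: sorted_uniq c_sorted => [x y z|x]; [exact: ltn_trans | exact: ltnn].
Qed.

Section BlockGraph.

Variables k m : nat.

(* Vertex x lies in block x %/ (k+2) at slot x %% (k+2); the endpoints of a
   block are its slots 0 and k+1, and the apex is alone in block m. *)
Definition block x := x %/ k.+2.
Definition slot x := x %% k.+2.
Definition endpoint x := (slot x == 0) || (slot x == k.+1).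
Definition apex := m * k.+2.

Definition back_adj x y :=
  (y < x) && (if block y == block x then ~~ (endpoint x && endpoint y)
              else (slot x == 0) && endpoint y).

Definition adj x y := back_adj x y || back_adj y x.

Lemma slot_lt x : slot x < k.+2. Proof. exact: ltn_pmod. Qed.

Lemma block_slot_inj x y : block x = block y -> slot x = slot y -> x = y.
Proof.
by rewrite /block /slot => bxy sxy; rewrite (divn_eq x k.+2) (divn_eq y k.+2) bxy sxy.
Qed.

Lemma slot_ltn x y : block x = block y -> x < y -> slot x < slot y.
Proof.
by rewrite /block /slot => bxy; rewrite {1}(divn_eq x k.+2) {1}(divn_eq y k.+2) bxy ltn_add2l.
Qed.

Lemma ltn_block x y : block x < block y -> x < y.
Proof. by apply: contraTT; rewrite -!leqNgt; apply: leq_div2r. Qed.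

Lemma block_le_apex x : x <= apex -> block x <= m.
Proof. by move=> x_le; rewrite -(mulnK m (ltn0Sn k.+1)) leq_div2r. Qed.

Lemma block_apex : block apex = m. Proof. exact: mulnK. Qed.

Lemma slot_apex : slot apex = 0. Proof. exact: modnMl. Qed.

Lemma block_eq_apex x : x <= apex -> block x = m -> x = apex.
Proof. by move=> x_le bx; apply/anti_leq; rewrite x_le /apex -bx leq_divM. Qed.

Lemma middle_not_endpoint x y z :
  block x = block y -> block y = block z -> x < y -> y < z -> ~~ endpoint y.
Proof.
move=> bxy byz /(slot_ltn bxy) sxy /(slot_ltn byz) syz.
rewrite /endpoint negb_or -lt0n (leq_trans _ sxy) //.
by rewrite neq_ltn (leq_trans syz) // -ltnS slot_lt.
Qed.

Lemma adj_sym : symmetric adj. Proof. by move=> x y; rewrite /adj orbC. Qed.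

Lemma adj_irr : irreflexive adj. Proof. by move=> x; rewrite /adj /back_adj ltnn. Qed.

Lemma adj_back x y : y < x -> adj x y = back_adj x y.
Proof. by move=> yx; rewrite /adj [back_adj y x]/back_adj ltnNge (ltnW yx) orbF. Qed.

Lemma adj_same_block x y :
  block x = block y -> x != y -> ~~ (endpoint x && endpoint y) -> adj x y.
Proof.
wlog yx : x y / y < x.
  move=> wlog_yx bxy; rewrite neq_ltn => /orP[xy|yx] not_ends.
    by rewrite adj_sym; apply: wlog_yx xy (esym bxy) (negbT (gtn_eqF xy)) _; rewrite andbC.
  exact: wlog_yx yx bxy (negbT (gtn_eqF yx)) not_ends.
by move=> bxy _ not_ends; rewrite adj_back // /back_adj yx bxy eqxx.
Qed.

Lemma adj_head x y : block y < block x -> slot x = 0 -> endpoint y -> adj x y.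
Proof.
move=> byx sx ey.
by rewrite (adj_back (ltn_block byx)) /back_adj (ltn_block byx) (ltn_eqF byx) sx ey.
Qed.

Lemma back_adj_head x y : slot x = 0 -> back_adj x y -> block y < block x /\ endpoint y.
Proof.
move=> sx /andP[yx]; case: eqP => [byx|/eqP byx /andP[_ ey]].
  by have := slot_ltn byx yx; rewrite sx.
by rewrite ltn_neqAle byx leq_div2r // ltnW.
Qed.

Lemma back_adj_inner x y : slot x != 0 -> back_adj x y ->
  [/\ block y = block x, slot y < slot x & (slot x = k.+1 -> slot y != 0)].
Proof.
move=> sx /andP[yx]; case: eqP => [byx not_ends|_ /andP[/eqP sx0]].
  2: by rewrite sx0 in sx.
split=> // [|sxk]; first exact: slot_ltn.
by apply: contraNneq not_ends => sy; rewrite /endpoint sy sxk !eqxx orbT.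
Qed.

Definition back_code x y :=
  if slot x == 0 then (block y).*2 + (slot y != 0) else slot y - (slot x == k.+1).

Lemma back_code_lt x y : m.*2 <= k -> x <= apex -> back_adj x y -> back_code x y < k.
Proof.
move=> mk x_le xy; rewrite /back_code; case: eqP => [sx|/eqP sx].
  have [byx _] := back_adj_head sx xy; have := block_le_apex x_le.
  move: byx; case: (slot y != 0); lia.
have [_ syx sy] := back_adj_inner sx xy; have := slot_lt x.
case: eqP => [sxk|sxk]; last lia.
by have := sy sxk; rewrite -lt0n; lia.
Qed.

Lemma back_code_inj x : {in back_adj x &, injective (back_code x)}.
Proof.
move=> y y' xy xy'; rewrite /back_code; case: eqP => [sx|/eqP sx] eq_code.
  have [_ ey] := back_adj_head sx xy; have [_ ey'] := back_adj_head sx xy'.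
  move: ey ey' eq_code; rewrite /endpoint.
  case/orP=> /eqP sy; case/orP=> /eqP sy'; rewrite sy sy' /= => eq_code;
    by apply: block_slot_inj; rewrite ?sy ?sy'; lia.
have [by1 _ sy] := back_adj_inner sx xy; have [by2 _ sy'] := back_adj_inner sx xy'.
apply: block_slot_inj; first by rewrite by1 by2.
move: eq_code; case: eqP => [sxk|_]; last lia.
by have := sy sxk; have := sy' sxk; rewrite -!lt0n; lia.
Qed.

Definition block_graph : rel 'I_apex.+1 := fun x y => adj x y.

Local Notation V := 'I_apex.+1.

Lemma block_graph_simple : simple_graph block_graph.
Proof. by split=> [x y|x]; [exact: adj_sym | exact: adj_irr]. Qed.

Lemma block_graph_degeneracy : m.*2 <= k -> degeneracy_le block_graph k.
Proof.
move=> mk; exists (enum V); split=> [||x]; first exact: enum_uniq.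
  by move=> x; rewrite mem_enum.
have back_nbr (y : V) :
    y \in [set y | block_graph x y & index y (enum V) < index x (enum V)] -> back_adj x y.
  by rewrite inE !index_enum_ord => /andP[+ yx]; rewrite /block_graph (adj_back yx).
apply: (@card_le_of_code _ _ (fun y : V => back_code x y)).
  by move=> y y' /back_nbr xy /back_nbr xy' /(back_code_inj xy xy'); apply: val_inj.
move=> y /back_nbr xy.
exact: back_code_lt mk (leq_ord x) xy.
Qed.

Definition in_matching x := (x == apex) || (0 < slot x < 3).

Lemma matching_back_adj x y : 1 < k -> x <= apex ->
  in_matching x -> in_matching y -> back_adj x y -> block y = block x /\ slot y + slot x = 3.
Proof.
move=> k_gt1 x_le /orP[/eqP xa|sx] yM xy; have yx := proj1 (andP xy).
  have [_ ey] := back_adj_head (etrans (congr1 slot xa) slot_apex) xy.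
  case/orP: yM => [/eqP ya|sy]; first by move: yx; rewrite xa ya ltnn.
  by move: ey sy; rewrite /endpoint; case/orP=> /eqP ->; lia.
have [byx syx _] := back_adj_inner (lt0n_neq0 (proj1 (andP sx))) xy.
case/orP: yM => [/eqP ya|sy]; first by move: (leq_trans yx x_le); rewrite ya ltnn.
by split=> //; lia.
Qed.

Lemma matching_adj x y : 1 < k -> x <= apex -> y <= apex ->
  in_matching x -> in_matching y -> adj x y -> block x = block y /\ slot x + slot y = 3.
Proof.
move=> k_gt1 x_le y_le xM yM /orP[xy|yx].
  by have [byx syx] := matching_back_adj k_gt1 x_le xM yM xy; rewrite byx addnC.
exact: matching_back_adj k_gt1 y_le yM xM yx.
Qed.

Definition matching_forest : {set V} := [set x : V | in_matching x].

Lemma matching_forest_fvs : 1 < k -> is_fvs block_graph (~: matching_forest).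
Proof.
move=> k_gt1 [|x [|y [|z c]]] [//= _ xyz_uniq] /andP[xy /andP[yz _]].
rewrite /= !inE !negbK => /and4P[xM yM zM _].
have [bxy sxy] := matching_adj k_gt1 (leq_ord x) (leq_ord y) xM yM xy.
have [byz syz] := matching_adj k_gt1 (leq_ord y) (leq_ord z) yM zM yz.
have xz : x = z by apply/ord_inj/block_slot_inj; [rewrite bxy byz | lia].
by move: xyz_uniq; rewrite xz /= !inE eqxx orbT.
Qed.

Lemma card_compl_matching_forest_le : 0 < k -> #|~: matching_forest| <= m * k.
Proof.
move=> k_gt0; have out_slot (y : V) : y \in ~: matching_forest ->
    block y < m /\ (slot y).-2 < k.
  rewrite !inE negb_or => /andP[/eqP ya sy]; have := slot_lt y.
  split; last by lia.
  rewrite ltn_neqAle (block_le_apex (leq_ord y)) andbT.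
  by apply/eqP => /(block_eq_apex (leq_ord y)).
(* Slots 1 and 2 are excluded, so [.-2] is injective on the remaining ones. *)
apply: (@card_le_of_code _ _ (fun y : V => block y * k + (slot y).-2)) => [y y' yF y'F|y yF].
  have [_ sy] := out_slot y yF; have [_ sy'] := out_slot y' y'F.
  move=> eq_code; have eq_block : block y = block y'.
    by have := congr1 (divn^~ k) eq_code; rewrite !divnMDl // !divn_small // !addn0.
  move: eq_code yF y'F; rewrite eq_block !inE !negb_or.
  move=> /addnI eq_slot /andP[_ sy1] /andP[_ sy2].
  by apply/ord_inj/block_slot_inj => //; lia.
have [by_lt sy] := out_slot y yF; nia.
Qed.

Definition block_rank (S : {set V}) (y : V) :=
  #|[set z in S | (block z == block y) && (z < y)]|.

Lemma block_rank_top (S : {set V}) (y : V) : block y = m -> block_rank S y = 0.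
Proof.
move=> by_m; apply: eq_card0 => z; rewrite !inE; apply/negP => /andP[_ /andP[/eqP bz zy]].
have za := block_eq_apex (leq_ord z) (etrans bz by_m).
by move: (leq_trans zy (leq_ord y)); rewrite za ltnn.
Qed.

Lemma block_rank_lt (S : {set V}) (y y' : V) :
  y \in S -> block y = block y' -> y < y' -> block_rank S y < block_rank S y'.
Proof.
move=> yS byy' yy'; apply: proper_card; apply/properP; split.
  apply/subsetP => z; rewrite !inE => /andP[-> /andP[/eqP bz zy]].
  by rewrite bz byy' eqxx (ltn_trans zy yy').
by exists y; rewrite !inE ?yS ?byy' ?eqxx ?yy' ?ltnn ?andbF.
Qed.

Lemma block_rank_inj (S : {set V}) (y y' : V) : y \in S -> y' \in S ->
  block y = block y' -> block_rank S y = block_rank S y' -> y = y'.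
Proof.
move=> yS y'S byy' eq_rank; case: (ltngtP y y') => [yy'|y'y|/ord_inj //].
  by have := block_rank_lt yS byy' yy'; rewrite eq_rank ltnn.
by have := block_rank_lt y'S (esym byy') y'y; rewrite eq_rank ltnn.
Qed.

Section Forest.

Variable F : {set V}.
Hypothesis F_fvs : is_fvs block_graph F.

Local Notation rank := (block_rank (~: F)).

Lemma rank_gt1_full_block (y : V) : y \notin F -> 1 < rank y ->
  exists z1 z2 : V,
    [/\ z1 \notin F, z2 \notin F, block z1 = block y, block z2 = block y &
    [/\ z1 < z2, z2 < y, slot z1 = 0 & slot y = k.+1]].
Proof.
move=> yF /card_gt1P[a [b [+ + ab]]]; rewrite !inE.
move=> /andP[aF /andP[/eqP ba ay]] /andP[bF /andP[/eqP bb by_]].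
wlog lt_ab : a b aF ba ay bF bb by_ ab / a < b.
  move=> wlog_ab; case: (ltngtP a b) => [lt_ab|lt_ba|/ord_inj eq_ab].
  - exact: wlog_ab lt_ab.
  - by apply: (wlog_ab b a bF bb by_ aF ba ay) => //; rewrite eq_sym.
  - by rewrite eq_ab eqxx in ab.
have ends : endpoint a && endpoint y.
  apply/negPn/negP => not_ends.
  have bab := etrans ba (esym bb).
  have b_mid := middle_not_endpoint bab bb lt_ab by_.
  apply: (@F_fvs [:: a; b; y]); last by rewrite /= aF bF yF.
  apply: increasing_graph_cycle => /=; first by []; first by rewrite lt_ab by_.
  rewrite /block_graph (adj_same_block bab (negbT (ltn_eqF lt_ab))).
    2: by rewrite (negbTE b_mid) andbF.
  rewrite (adj_same_block bb (negbT (ltn_eqF by_))) ?(negbTE b_mid) //.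
  by rewrite (adj_same_block (esym ba) (negbT (gtn_eqF ay))) // andbC.
have [sa sy] : slot a = 0 /\ slot y = k.+1.
  have := slot_ltn ba ay; have := slot_lt y.
  by move: ends; rewrite /endpoint => /andP[/orP[] /eqP -> /orP[] /eqP ->]; lia.
by exists a, b.
Qed.

Lemma head_before_full_block (y w : V) : y \notin F -> 1 < rank y ->
  w \notin F -> slot w = 0 -> block w <= block y.
Proof.
move=> yF ry wF sw; rewrite leqNgt; apply/negP => byw.
have [z1 [z2 [z1F z2F bz1 bz2 [z12 z2y sz1 sy]]]] := rank_gt1_full_block yF ry.
have bz12 := etrans bz1 (esym bz2).
have z2_mid := middle_not_endpoint bz12 bz2 z12 z2y.
have ez1 : endpoint z1 by rewrite /endpoint sz1 eqxx.
have ey : endpoint y by rewrite /endpoint sy eqxx orbT.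
apply: (@F_fvs [:: z1; z2; y; w]); last by rewrite /= z1F z2F yF wF.
apply: increasing_graph_cycle => /=; first by []; first by rewrite z12 z2y (ltn_block byw).
rewrite /block_graph (adj_same_block bz12 (negbT (ltn_eqF z12))).
  2: by rewrite (negbTE z2_mid) andbF.
rewrite (adj_same_block bz2 (negbT (ltn_eqF z2y))) ?(negbTE z2_mid) //.
by rewrite adj_sym !adj_head // bz1.
Qed.

Lemma full_block_lt_top (y : V) : y \notin F -> 1 < rank y -> block y < m.
Proof.
move=> yF ry; rewrite ltn_neqAle (block_le_apex (leq_ord y)) andbT.
by apply/eqP => /(block_rank_top (~: F)) r0; rewrite r0 in ry.
Qed.

Definition exceptional (y : V) := (1 < rank y) || (y == apex :> nat).

Lemma exceptional_unique (y y' : V) : y \notin F -> y' \notin F ->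
  exceptional y -> exceptional y' -> y = y'.
Proof.
have apex_free (x a : V) : x \notin F -> 1 < rank x -> a \notin F -> a <> apex :> nat.
  move=> xF rx aF a_apex; have := head_before_full_block xF rx aF.
  by rewrite a_apex block_apex slot_apex leqNgt (full_block_lt_top xF rx) => /(_ erefl).
wlog byy' : y y' / block y <= block y'.
  move=> wlog_y yF y'F ey ey'; case: (leqP (block y) (block y')) => [le|/ltnW le].
    exact: wlog_y.
  by apply/esym/wlog_y.
move=> yF y'F /orP[ry|/eqP ya] /orP[ry'|/eqP y'a].
- have [z1 [_ [z1F _ bz1 _ [_ _ sz1 sy']]]] := rank_gt1_full_block y'F ry'.
  have [_ [_ [_ _ _ _ [_ _ _ sy]]]] := rank_gt1_full_block yF ry.
  have := head_before_full_block yF ry z1F sz1; rewrite bz1 => by'y.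
  by apply/ord_inj/block_slot_inj; [apply/anti_leq; rewrite byy' by'y | rewrite sy sy'].
- by case: (apex_free y y' yF ry y'F y'a).
- by case: (apex_free y' y y'F ry' yF ya).
- by apply: ord_inj; rewrite ya y'a.
Qed.

Lemma card_compl_fvs_le : #|~: F| <= m.*2.+1.
Proof.
(* The apex and a vertex above a full block, at most one of which exists,
   share the value 2m. *)
pose code y := if exceptional y then m.*2 else (block y).*2 + rank y.
have regular_lt (y : V) : ~~ exceptional y -> rank y < 2 /\ block y < m.
  rewrite negb_or -leqNgt => /andP[ry ya]; split=> //.
  rewrite ltn_neqAle (block_le_apex (leq_ord y)) andbT.
  by apply: contraNneq ya => /(block_eq_apex (leq_ord y)) ->.
apply: (@card_le_of_code _ _ code) => [y y'|y _]; last first.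
  by rewrite /code; case: ifP => // /negbT /regular_lt; lia.
rewrite !inE /code => yF y'F; case: ifP => ey; case: ifP => ey'.
- by move=> _; exact: exceptional_unique yF y'F ey ey'.
- by have := regular_lt y' (negbT ey'); lia.
- by have := regular_lt y (negbT ey); lia.
move=> eq_code; have [ry by_] := regular_lt y (negbT ey).
have [ry' by'] := regular_lt y' (negbT ey').
by apply: (block_rank_inj (S := ~: F)); rewrite ?inE; [exact: yF | exact: y'F | lia | lia].
Qed.

End Forest.

Lemma block_graph_fvs_number : 1 < k -> fvs_number_is block_graph (m * k).
Proof.
move=> k_gt1; have fvs_ge (F : {set V}) : #|~: F| <= m.*2.+1 -> m * k <= #|F|.
  have := cardsC F; rewrite card_ord; move: #|F| #|~: F| => a b.
  by rewrite /apex !mulnSr; lia.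
split=> [|F /card_compl_fvs_le /fvs_ge //].
exists (~: matching_forest); split; first exact: matching_forest_fvs.
apply/anti_leq; rewrite card_compl_matching_forest_le ?(ltnW k_gt1) //=.
exact/fvs_ge/card_compl_fvs_le/matching_forest_fvs.
Qed.

End BlockGraph.

Theorem mainTheorem4 (k : nat) (hk : 2 <= k) (hev : ~~ odd k) :
  exists e : rel 'I_((k + 2) * k %/ 2 + 1),
    [/\ simple_graph e, degeneracy_le e k & fvs_number_is e (k ^ 2 %/ 2)].
Proof.
have [m km] : exists m, k = m.*2.
  by exists k./2; rewrite -[LHS](odd_double_half k) (negbTE hev).
have -> : (k + 2) * k %/ 2 + 1 = (apex k m).+1.
  by rewrite /apex km -mul2n mulnCA mulKn // addn1 addn2 mulnC.
have -> : k ^ 2 %/ 2 = m * k by rewrite km -mul2n -mulnn -mulnA mulKn.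
exists (@block_graph k m); split; first exact: block_graph_simple.
- by apply: block_graph_degeneracy; rewrite km.
- exact: block_graph_fvs_number.
Qed.
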